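(* Let $(V,\sim)$ be a finite graph with side data $\mathrm{left}(\cdot),\mathrm{right}(\cdot)$ as in the context, and assume $(V,\sim)$ admits a conformal model. Let $Q\subseteq V$ be a prime node of the modular decomposition tree of $(V,\sim)$ with children $M_1,\ldots,M_n$, and let $U \subseteq Q$ contain exactly one vertex from each $M_j$. Fix $i \in \{1,\ldots,n\}$ and $v,w \in M_i$. (1) If $M_i$ is parallel (i.e. $(M_i,\sim)$ is disconnected), then the following are equivalent: (a) for every $u \in Q \setminus M_i$ with $u \parallel M_i$, either $\{v,w\} \subseteq \mathrm{left}(u)$ or $\{v,w\} \subseteq \mathrm{right}(u)$; (b) for every $u \in U \setminus M_i$ with $u \parallel M_i$, either $\{v,w\} \subseteq \mathrm{left}(u)$ or $\{v,w\} \subseteq \mathrm{right}(u)$. (2) If $M_i$ is serial (i.e. the complement of $(M_i,\sim)$ is disconnected), then the following are equivalent: (a) $\{\mathrm{left}(v) \cap (Q\setminus M_i), \mathrm{right}(v) \cap (Q \setminus M_i)\} = \{\mathrm{left}(w) \cap (Q\setminus M_i), \mathrm{right}(w) \cap (Q \setminus M_i)\}$; (b) $\{\mathrm{left}(v) \cap (U\setminus M_i), \mathrm{right}(v) \cap (U \setminus M_i)\} = \{\mathrm{left}(w) \cap (U\setminus M_i), \mathrm{right}(w) \cap (U \setminus M_i)\}$.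
   Context: Graph and side data. $(V,\sim)$ is a finite simple graph; $u \parallel v$ means $u \ne v$ and $u,v$ non-adjacent; for sets, $X\sim Y$ / $X \parallel Y$ means the relation holds for all pairs $x\in X$, $y\in Y$ (and $u \parallel M$ means $\{u\}\parallel M$). For every $u \in V$ we are given a partition of $\{v\in V: v \parallel u\}$ into $\mathrm{left}(u)$ and $\mathrm{right}(u)$. (In the paper $(V,\sim)$ is the overlap graph $G_{ov}$ of a circular-arc graph and the sides come from its arc model; conditions (a) in both items are the paper's definition of the $K$-relation on a parallel, resp. serial, child $M_i$.) Conformal models. For $X\subseteq V$, a conformal model of $(X,\sim)$ is a circular word (up to rotation) in which each letter $u^0,u^1$, $u \in X$, occurs exactly once, such that for distinct $u,v\in X$ the letters of $u$ and $v$ alternate iff $u \sim v$, and for $u \parallel v$ both letters of $v$ lie between $u^0$ and $u^1$ (reading cyclically forward from $u^0$) iff $v \in \mathrm{left}(u)$, and both lie between $u^1$ and $u^0$ iff $v \in \mathrm{right}(u)$. Modular decomposition. A module of $(X,\sim)$ is a set $M\subseteq X$ such that every vertex outside $M$ is adjacent to all or none of $M$; it is trivial if $|M|\le1$ or $M=X$; a graph is prime if it has only trivial modules. $Q$ is a prime node of the modular decomposition tree of $(V,\sim)$ whose children $M_1,\ldots,M_n$ are the maximal strong modules properly contained in $Q$, the quotient graph on one representative per child being prime. *)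

From mathcomp Require Import all_boot.
Set Implicit Arguments. Unset Strict Implicit. Unset Printing Implicit Defensive.

Section Defs.
Variables (V : finType) (adj : rel V).

Definition nonadj (u v : V) : bool := (u != v) && ~~ adj u v.

(* Letters u^0 = (u,false), u^1 = (u,true).
   [cbetween s x y z]: reading the circular word s cyclically forward from
   letter x, the letter z occurs strictly before letter y. *)
Definition cbetween (s : seq (V * bool)) (x y z : V * bool) : bool :=
  let a := index x s in let b := index y s in let p := index z s in
  if a < b then (a < p) && (p < b) else (a < p) || (p < b).

Definition conformal_model (L R : V -> {set V}) (s : seq (V * bool)) : Prop :=
  [/\ uniq s, (forall l : V * bool, l \in s),
      (forall u v : V, u != v ->
        (adj u v <-> (cbetween s (u, false) (u, true) (v, false)
                      != cbetween s (u, false) (u, true) (v, true)))),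
      (forall u v : V, nonadj u v ->
        ((v \in L u) <-> (cbetween s (u, false) (u, true) (v, false)
                          && cbetween s (u, false) (u, true) (v, true))))
    & (forall u v : V, nonadj u v ->
        ((v \in R u) <-> (cbetween s (u, true) (u, false) (v, false)
                          && cbetween s (u, true) (u, false) (v, true))))].

Definition module_in (X M : {set V}) : bool :=
  (M \subset X) &&
  [forall x in X :\: M, [forall y in M, adj x y] || [forall y in M, ~~ adj x y]].

Definition module (M : {set V}) : bool := module_in [set: V] M.

Definition trivial_module (X M : {set V}) : bool := (#|M| <= 1) || (M == X).

Definition prime_in (X : {set V}) : bool :=
  [forall M : {set V}, module_in X M ==> trivial_module X M].

Definition strong_module (M : {set V}) : bool :=
  module M &&
  [forall M' : {set V}, module M' ==>
     [|| M :&: M' == set0, M \subset M' | M' \subset M]].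

Definition md_children (Q : {set V}) : {set {set V}} :=
  [set M | [&& strong_module M, M \proper Q &
     [forall M' : {set V}, (strong_module M' && (M' \proper Q)) ==> ~~ (M \proper M')]]].

Definition representatives (Q U : {set V}) : bool :=
  (U \subset Q) && [forall M in md_children Q, #|U :&: M| == 1].

(* Q is a prime node: a strong module whose quotient (the graph induced on a
   set of representatives of its children) is prime, with at least 3 children
   (so that Q is neither a parallel nor a serial node). *)
Definition prime_node (Q : {set V}) : Prop :=
  [/\ strong_module Q, 2 < #|md_children Q| &
      forall U : {set V}, representatives Q U -> prime_in U].

Definition connected_in (e : rel V) (X : {set V}) : bool :=
  [forall x in X, forall y in X,
     connect [rel a b | [&& a \in X, b \in X & e a b]] x y].

Definition parallel (M : {set V}) : bool := ~~ connected_in adj M.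
Definition serial (M : {set V}) : bool := ~~ connected_in nonadj M.

End Defs.

From mathcomp Require Import all_boot zify.
Set Implicit Arguments. Unset Strict Implicit. Unset Printing Implicit Defensive.

(* A conformal model is a chord diagram: u ~ v iff the chords of u and v cross,
   and for u ∥ v the sets left(u), right(u) are read off the two arcs of chord u.
   Both parts thus compare on which side of which chord a vertex lies.  For
   u in Q \ M_i, lying in a child M_j with representative u' in U, it suffices
   that u and u' see v and w alike: in (1), v and w lie on a common side of u iff
   of u'; in (2), u and u' lie on a common side of v iff of w.  A violation
   produces a pattern of crossings that primality of the quotient on U rules out:
   the quotient has no isolated vertex, so some vertex is adjacent to a whole
   child, and no twins, so some vertex tells two children apart.  In (2),
   seriality of M_i moreover places all of M_i on one side of u. *)

Section PrimeNode.
Variables (V : finType) (adj : rel V).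
Hypotheses (adj_sym : symmetric adj) (adj_irr : irreflexive adj).

Lemma nonadj_sym u v : nonadj adj u v = nonadj adj v u.
Proof. by rewrite /nonadj eq_sym adj_sym. Qed.

Lemma nonadj_neq u v : nonadj adj u v -> u != v.
Proof. by case/andP. Qed.

Lemma adj_neq u v : adj u v -> u != v.
Proof. by apply: contraTneq => ->; rewrite adj_irr. Qed.

Lemma adj_nonadj_neq u v x : nonadj adj u v -> adj v x -> u != x.
Proof. by case/andP=> _ nuv; apply: contraTneq => <-; rewrite adj_sym. Qed.

Lemma serial_common_neighbor M p q : serial adj M -> p \in M -> q \in M ->
  nonadj adj p q -> exists2 t, t \in M & adj p t && adj q t.
Proof.
move=> Mser pM qM npq; apply/exists_inP; apply: contraNT Mser => /exists_inPn nocommon.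
set e := [rel a b | [&& a \in M, b \in M & nonadj adj a b]].
have e_sym : symmetric e by move=> a b; rewrite /= nonadj_sym andbCA.
have p_to y : y \in M -> connect e p y.
  move=> yM; case: (eqVneq p y) => [<-|py]; first exact: connect0.
  case py_adj: (adj p y); last by apply: connect1; rewrite /= pM yM /nonadj py py_adj.
  have nqy : nonadj adj q y.
    have nqp : nonadj adj q p by rewrite nonadj_sym.
    by rewrite /nonadj (adj_nonadj_neq nqp py_adj); have := nocommon y yM; rewrite py_adj.
  by apply: (connect_trans (y := q)); apply: connect1; rewrite /= ?pM ?qM ?yM.
apply/forall_inP => x xM; apply/forall_inP => y yM.
by apply: connect_trans (p_to y yM); rewrite (sym_connect_sym e_sym) p_to.
Qed.

(** * Modules and the children of a prime node *)

Lemma prime_in_neighbor U r : prime_in adj U -> 2 < #|U| -> r \in U ->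
  exists2 x, x \in U & adj r x.
Proof.
move=> Uprime Ubig rU; apply/exists_inP; apply: contraTT Ubig => /exists_inPn isolated.
have Umod : module_in adj U (U :\ r).
  rewrite /module_in subD1set; apply/forall_inP => z /setDP [zU].
  rewrite in_setD1 zU andbT negbK => /eqP ->.
  by apply/orP; right; apply/forall_inP => y /setD1P [_ /isolated].
case/orP: (implyP (forallP Uprime _) Umod) => [small | /eqP same].
  by rewrite (cardsD1 r U) rU add1n ltnS -leqNgt.
by move: rU; rewrite -same !inE eqxx.
Qed.

Lemma prime_in_no_twins U a b : prime_in adj U -> 2 < #|U| ->
    a \in U -> b \in U -> a != b ->
  exists z, [/\ z \in U, z != a, z != b & adj z a != adj z b].
Proof.
move=> Uprime Ubig aU bU ab.
suff /existsP [z /and4P [*]] : [exists z, [&& z \in U, z != a, z != b & adj z a != adj z b]].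
  by exists z.
apply: contraTT Ubig => /existsPn twins.
have abmod : module_in adj U [set a; b].
  apply/andP; split; first by apply/subsetP => y /set2P [->|->].
  apply/forall_inP => z; rewrite !inE negb_or => /andP [/andP [za zb] zU].
  have zab : adj z a = adj z b by apply/eqP; move: (twins z); rewrite zU za zb negbK.
  by case: (boolP (adj z a)) => za'; apply/orP; [left | right];
    apply/forall_inP => y /set2P [->|->]; rewrite -?zab.
case/orP: (implyP (forallP Uprime _) abmod); first by rewrite cards2 ab.
by move/eqP <-; rewrite cards2 ab.
Qed.

Lemma strong_module_adj M x y y' : strong_module adj M ->
  x \notin M -> y \in M -> y' \in M -> adj x y = adj x y'.
Proof.
case/andP => /andP [_ /forall_inP Mmod] _ xM yM y'M.
have : x \in [set: V] :\: M by rewrite !inE xM.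
case/Mmod/orP => [/forall_inP all_adj | /forall_inP no_adj]; first by rewrite !all_adj.
by rewrite (negbTE (no_adj _ yM)) (negbTE (no_adj _ y'M)).
Qed.

Lemma strong_module_set1 x : strong_module adj [set x].
Proof.
apply/andP; split.
  apply/andP; split; first exact: subsetT.
  apply/forall_inP => z _; apply/orP.
  by case: (boolP (adj z x)) => zx; [left | right]; apply/forall_inP => y /set1P ->.
apply/forallP => M; apply/implyP => _.
case: (boolP (x \in M)) => xM; first by rewrite sub1set xM orbT.
by rewrite setI_eq0 disjoints1 xM.
Qed.

Variables Q U : {set V}.
Hypotheses (Qprime : prime_node adj Q) (Urep : representatives adj Q U).
Local Notation children := (md_children adj Q).

Lemma child_adj M x y y' : M \in children ->
  x \notin M -> y \in M -> y' \in M -> adj x y = adj x y'.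
Proof. by rewrite inE => /and3P [Mstrong _ _]; apply: strong_module_adj. Qed.

Lemma children_eq M1 M2 x : M1 \in children -> M2 \in children ->
  x \in M1 -> x \in M2 -> M1 = M2.
Proof.
rewrite !inE => /and3P [M1strong M1Q /forallP M1max] /and3P [M2strong M2Q /forallP M2max].
move=> xM1 xM2; have /andP [_ /forallP /(_ M2)] := M1strong.
rewrite (proj1 (andP M2strong)) /= => /or3P [/eqP M12 | M12 | M21].
- by move/setP/(_ x): M12; rewrite !inE xM1 xM2.
- by apply/eqP; move: (M1max M2); rewrite M2strong M2Q /= properEneq M12 andbT negbK.
- by apply/esym/eqP; move: (M2max M1); rewrite M1strong M1Q /= properEneq M21 andbT negbK.
Qed.

Lemma child_notin M1 M2 x : M1 \in children -> M2 \in children -> M1 != M2 ->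
  x \in M1 -> x \notin M2.
Proof. by move=> M1ch M2ch M12 xM1; apply: contra_neqN M12 => /(children_eq M1ch M2ch xM1). Qed.

Lemma child_cover x : x \in Q -> exists2 M, M \in children & x \in M.
Proof.
move=> xQ; have [_ many_children _] := Qprime.
have Qx : Q != [set x].
  apply: contraTneq many_children => Qx; rewrite -leqNgt.
  apply: (leq_trans (subset_leq_card (_ : children \subset [set set0]))); last by rewrite cards1.
  apply/subsetP => M; rewrite !inE Qx => /and3P [_ /proper_card].
  by rewrite cards1 ltnS leqn0 cards_eq0.
pose P M := [&& strong_module adj M, M \proper Q & x \in M].
have Px : P [set x] by rewrite /P strong_module_set1 set11 properEneq eq_sym Qx sub1set xQ.
case: (@arg_maxnP _ [set x] P (fun M : {set V} => #|M|) Px) => M /and3P [Mstrong MQ xM] Mmax.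
exists M => //; rewrite inE Mstrong MQ; apply/forallP => M'.
apply/implyP => /andP [M'strong M'Q]; apply/negP => MM'.
have /Mmax : P M' by rewrite /P M'strong M'Q (subsetP (proper_sub MM')).
by apply/negP; rewrite -ltnNge proper_card.
Qed.

Lemma child_representative M : M \in children ->
  exists r, [/\ r \in U, r \in M & {in U, forall z, z \in M -> z = r}].
Proof.
move=> Mch; have /cards1P [r Ur] := forall_inP (proj2 (andP Urep)) M Mch.
have /setIP [rU rM] : r \in U :&: M by rewrite Ur set11.
by exists r; split=> // z zU zM; apply/set1P; rewrite -Ur inE zU.
Qed.

Lemma representatives_card : 2 < #|U|.
Proof.
have [_ many_children _] := Qprime.
pose child_of z := odflt set0 [pick M in children | z \in M].
apply: (leq_trans many_children); apply: (leq_trans _ (leq_imset_card child_of U)).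
apply/subset_leq_card/subsetP => M Mch; have [r [rU rM _]] := child_representative Mch.
apply/imsetP; exists r => //; rewrite /child_of.
case: pickP => [M' /andP [M'ch rM'] | none] /=; first exact: children_eq rM rM'.
by move: (none M); rewrite Mch rM.
Qed.

Lemma representatives_prime : prime_in adj U.
Proof. by case: Qprime => _ _; apply. Qed.

Lemma child_neighbor M : M \in children ->
  exists2 x, x \notin M & {in M, forall y, adj x y}.
Proof.
move=> Mch; have [r [rU rM r_uniq]] := child_representative Mch.
have [x xU rx] := prime_in_neighbor representatives_prime representatives_card rU.
have xM : x \notin M by apply: contraL rx => xM; rewrite (r_uniq x xU xM) adj_irr.
by exists x => // y yM; rewrite (child_adj Mch xM yM rM) adj_sym.
Qed.

Lemma children_distinguished M1 M2 y1 y2 :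
    M1 \in children -> M2 \in children -> M1 != M2 -> y1 \in M1 -> y2 \in M2 ->
  exists z, [/\ z \notin M1, z \notin M2 & adj z y1 != adj z y2].
Proof.
move=> M1ch M2ch M12 y1M1 y2M2.
have [r1 [r1U r1M1 r1_uniq]] := child_representative M1ch.
have [r2 [r2U r2M2 r2_uniq]] := child_representative M2ch.
have r12 : r1 != r2.
  by apply: contraTneq r1M1 => ->; apply: child_notin M2ch M1ch _ r2M2; rewrite eq_sym.
have [z [zU zr1 zr2 z_sep]] :=
  prime_in_no_twins representatives_prime representatives_card r1U r2U r12.
have zM1 : z \notin M1 by apply: contra zr1 => /(r1_uniq z zU) ->.
have zM2 : z \notin M2 by apply: contra zr2 => /(r2_uniq z zU) ->.
by exists z; rewrite (child_adj M1ch zM1 y1M1 r1M1) (child_adj M2ch zM2 y2M2 r2M2).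
Qed.

Lemma representatives_subset : U \subset Q.
Proof. by case/andP: Urep. Qed.

Lemma child_nonadj M u v w : M \in children -> u \notin M -> v \in M -> w \in M ->
  nonadj adj v u = nonadj adj w u.
Proof.
move=> Mch uM vM wM.
by rewrite /nonadj !(memPn uM) // adj_sym (child_adj Mch uM vM wM) adj_sym.
Qed.

Lemma children_nonadj M1 M2 a a' b b' :
    M1 \in children -> M2 \in children -> M1 != M2 ->
    a \in M1 -> a' \in M1 -> b \in M2 -> b' \in M2 ->
  nonadj adj a b = nonadj adj a' b'.
Proof.
move=> M1ch M2ch M12 aM1 a'M1 bM2 b'M2.
have b'M1 : b' \notin M1 by apply: child_notin M2ch M1ch _ b'M2; rewrite eq_sym.
rewrite nonadj_sym (child_nonadj M2ch (child_notin M1ch M2ch M12 aM1) bM2 b'M2).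
by rewrite nonadj_sym (child_nonadj M1ch b'M1 aM1 a'M1).
Qed.

Variables (L R : V -> {set V}).
Hypothesis sides : forall u : V,
  L u :&: R u = set0 /\ L u :|: R u = [set v | nonadj adj u v].

Lemma mem_LR u v : (v \in L u) || (v \in R u) = nonadj adj u v.
Proof. by rewrite -in_setU (proj2 (sides u)) inE. Qed.

Lemma notin_LR u v : ~~ nonadj adj u v -> (v \in L u) = false /\ (v \in R u) = false.
Proof. by rewrite -mem_LR negb_or => /andP [/negbTE -> /negbTE ->]. Qed.

Lemma mem_R u v : nonadj adj u v -> (v \in R u) = ~~ (v \in L u).
Proof.
have : v \notin L u :&: R u by rewrite (proj1 (sides u)) inE.
by rewrite -mem_LR inE; case: (v \in L u); case: (v \in R u).
Qed.

Lemma sides_pair_eqP (X : {set V}) v w : {in X, forall u, nonadj adj v u = nonadj adj w u} ->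
  [set L v :&: X; R v :&: X] = [set L w :&: X; R w :&: X] <->
  exists b, {in X, forall u, nonadj adj v u -> ((u \in L v) == (u \in L w)) = b}.
Proof.
move=> same_nonadj; split=> [pair_eq | [b b_const]].
  have : L v :&: X \in [set L w :&: X; R w :&: X] by rewrite -pair_eq set21.
  case/set2P=> /setP Lv_eq; [exists true | exists false] => u uX nvu;
    have nwu : nonadj adj w u by rewrite -same_nonadj.
  - by move: (Lv_eq u); rewrite !inE uX !andbT => ->; rewrite eqxx.
  - by move: (Lv_eq u); rewrite !inE uX !andbT mem_R // => ->; case: (u \in L w).
have memE u : u \in X -> (u \in L v) = (u \in if b then L w else R w) /\
                        (u \in R v) = (u \in if b then R w else L w).
  move=> uX; have := same_nonadj u uX.
  case: (boolP (nonadj adj v u)) => nvu nwu; last first.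
    have [Lv Rv] := notin_LR nvu; have [Lw Rw] := notin_LR (negbT (esym nwu)).
    by rewrite Lv Rv; case: (b); rewrite ?Lw ?Rw.
  have {}nwu : nonadj adj w u by rewrite -nwu.
  have := b_const u uX nvu; case: (b) => /=; rewrite (mem_R nvu) (mem_R nwu);
    by case: (u \in L v); case: (u \in L w).
have [Lv_eq Rv_eq] : L v :&: X = (if b then L w else R w) :&: X /\
                     R v :&: X = (if b then R w else L w) :&: X.
  by split; apply/setP => u; rewrite !inE; case: (boolP (u \in X)) => uX;
    rewrite ?andbF ?andbT // ?(proj1 (memE u uX)) ?(proj2 (memE u uX)).
by rewrite Lv_eq Rv_eq; case: b {b_const memE Lv_eq Rv_eq}; rewrite // setUC.
Qed.

(** * Chords of a conformal model *)

Variable s : seq (V * bool).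
Hypothesis model : conformal_model adj L R s.

(* Cut the circular word s after its last letter: vertex x becomes the chord
   joining positions [pos x false] and [pos x true], [inside x p] says that p lies
   strictly between these ends, and [side x y] tells on which of the two arcs of
   chord x the first letter of y lies. *)
Definition pos (x : V) (b : bool) : nat := index (x, b) s.

Definition inside (x : V) (p : nat) : bool :=
  minn (pos x false) (pos x true) < p < maxn (pos x false) (pos x true).

Definition side (x y : V) : bool := inside x (pos y false).

Definition orient (x : V) : bool := pos x false < pos x true.

Lemma pos_inj x b y c : pos x b = pos y c -> (x, b) = (y, c).
Proof.
case: model => _ s_all _ _ _ E.
by rewrite -(nth_index (x, b) (s_all (x, b))) -/(pos x b) E nth_index.
Qed.

Lemma pos_neq x b y c : x != y -> pos x b != pos y c.
Proof. by apply: contraNneq => /pos_inj [->]. Qed.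

Lemma pos_ends_neq x : pos x false != pos x true.
Proof. by apply/eqP => /pos_inj. Qed.

Lemma cbetween_inside u z : z.1 != u ->
  cbetween s (u, false) (u, true) z = (orient u == inside u (index z s)).
Proof.
case: z => y c /= yu; rewrite /cbetween /orient /inside -!/(pos _ _) -/(pos y c).
have := pos_ends_neq u; have := pos_neq c false yu; have := pos_neq c true yu.
by case: ifP => ?; lia.
Qed.

Lemma adj_crossing u v : u != v ->
  adj u v = (inside u (pos v false) != inside u (pos v true)).
Proof.
case: model => _ _ crossing _ _ uv; have vu : v != u by rewrite eq_sym.
have ends c : cbetween s (u, false) (u, true) (v, c) = (orient u == inside u (pos v c)).
  exact: cbetween_inside.
have ends_differ : (cbetween s (u, false) (u, true) (v, false)
    != cbetween s (u, false) (u, true) (v, true))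
    = (inside u (pos v false) != inside u (pos v true)).
  by rewrite !ends; case: (orient u) (inside u _) (inside u _) => [] [] [].
by rewrite -ends_differ; apply/idP/idP => /(crossing u v uv).
Qed.

Lemma inside_nonadj u t c : nonadj adj u t -> inside u (pos t c) = side u t.
Proof. by case/andP=> ut; rewrite adj_crossing // negbK => /eqP E; case: c. Qed.

Lemma inside_adj u x b : adj u x -> inside u (pos x (~~ b)) = ~~ inside u (pos x b).
Proof.
move=> ux; move: ux (adj_neq ux) => /[swap] /adj_crossing -> ends.
by case: b ends; case: (inside u _) (inside u _) => [] [].
Qed.

Lemma mem_L_side u v : nonadj adj u v -> (v \in L u) = (side u v == orient u).
Proof.
case: model => _ _ _ left _ nuv; have vu : v != u by rewrite eq_sym (nonadj_neq nuv).
have ends : cbetween s (u, false) (u, true) (v, false)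
    && cbetween s (u, false) (u, true) (v, true) = (side u v == orient u).
  by rewrite !cbetween_inside //= -!/(pos v _) !inside_nonadj // andbb eq_sym.
by rewrite -ends; apply/idP/idP => /(left u v nuv).
Qed.

Lemma interval_noncrossing_side (a0 a1 v0 v1 p : nat) :
    a0 != a1 -> v0 != v1 -> a0 != v0 -> a0 != v1 -> a1 != v0 -> a1 != v1 ->
    p != a0 -> p != a1 -> p != v0 -> p != v1 ->
    (minn v0 v1 < a0 < maxn v0 v1) = (minn v0 v1 < a1 < maxn v0 v1) ->
    (minn v0 v1 < p < maxn v0 v1) != (minn v0 v1 < a0 < maxn v0 v1) ->
  (minn a0 a1 < p < maxn a0 a1) = (minn a0 a1 < v0 < maxn a0 a1).
Proof. by case: (ltngtP a0 a1); case: (ltngtP v0 v1) => // *; lia. Qed.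

Lemma noncrossing_side a v y b : nonadj adj v a -> y != a -> y != v ->
  inside v (pos y b) != side v a -> inside a (pos y b) = side a v.
Proof.
move=> nva ya yv; have va := nonadj_neq nva; have av : a != v by rewrite eq_sym.
apply: interval_noncrossing_side; rewrite ?pos_ends_neq ?pos_neq //.
by rewrite -!/(inside v _) !(inside_nonadj _ nva).
Qed.

Lemma crossing_end u u' v x : nonadj adj u v -> nonadj adj u' v ->
    side v u = side v u' -> adj v x ->
  exists b, inside u (pos x b) = side u v /\ inside u' (pos x b) = side u' v.
Proof.
move=> nuv nu'v vu_vu' vx.
have [b far_end] : exists b, inside v (pos x b) != side v u.
  case: (boolP (inside v (pos x false) == side v u)) => [/eqP E|]; last by exists false.
  by exists true; rewrite -E eq_sym -(adj_crossing (adj_neq vx)).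
have xv : x != v by rewrite eq_sym adj_neq.
have x_neq a : nonadj adj a v -> x != a by move=> nav; rewrite eq_sym (adj_nonadj_neq nav vx).
by exists b; split; apply: noncrossing_side => //; rewrite 1?nonadj_sym -?vu_vu' ?xv ?x_neq.
Qed.

Lemma side_crossing u v t : nonadj adj u v -> nonadj adj u t -> adj v t ->
  side u t = side u v.
Proof.
move=> nuv nut vt; have [b [<- _]] := crossing_end nuv nuv erefl vt.
by rewrite inside_nonadj.
Qed.

Lemma crossing_separated c a b y : nonadj adj c a -> nonadj adj c b ->
  side c a != side c b -> adj a y -> adj b y -> adj c y.
Proof.
move=> nca ncb separated ay by_; apply: contraNT separated => ncy.
have {}ncy : nonadj adj c y by rewrite /nonadj (adj_nonadj_neq nca ay).
by rewrite -(side_crossing nca ncy ay) -(side_crossing ncb ncy by_) eqxx.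
Qed.

Lemma crossing_pair_nonadj u u' v w x :
    nonadj adj u v -> nonadj adj u w -> nonadj adj u' v -> nonadj adj u' w ->
    side u v != side u w -> side u' v = side u' w ->
    side v u = side v u' -> side w u = side w u' ->
  adj v x -> adj w x -> ~~ adj u' x.
Proof.
move=> nuv nuw nu'v nu'w u_sep u'_same v_same w_same vx wx.
have [b1 [u_b1 u'_b1]] := crossing_end nuv nu'v v_same vx.
have [b2 [u_b2 u'_b2]] := crossing_end nuw nu'w w_same wx.
have b2E : b2 = ~~ b1.
  by move: u_sep; rewrite -u_b1 -u_b2; case: (b1) (b2) => [] []; rewrite ?eqxx.
apply/negP => /(inside_adj b1).
by rewrite u'_b1 -b2E u'_b2 u'_same; case: (side u' w).
Qed.

Lemma crossing_same_side u u' v w x :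
    nonadj adj u v -> nonadj adj u' v -> nonadj adj u w -> nonadj adj u' w ->
    side u w = side u v -> side u' w = side u' v -> side v u = side v u' ->
  adj u x -> adj u' x -> adj v x -> side w u = side w u'.
Proof.
move=> nuv nu'v nuw nu'w u_wv u'_wv v_same ux u'x vx.
have [b [u_b u'_b]] := crossing_end nuv nu'v v_same vx.
have other_end c : nonadj adj c w -> adj c x -> inside c (pos x b) = side c w ->
    inside w (pos x (~~ b)) = side w c.
  move=> ncw cx c_b; apply: noncrossing_side => //.
  - by rewrite eq_sym (adj_nonadj_neq _ cx) // nonadj_sym.
  - by rewrite eq_sym adj_neq.
  by rewrite inside_adj // c_b; case: (side c w).
by rewrite -(other_end u) ?u_wv // -(other_end u') ?u'_wv.
Qed.

Lemma serial_same_side M u p q : serial adj M -> p \in M -> q \in M ->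
  {in M, forall y, nonadj adj u y} -> side u p = side u q.
Proof.
move=> Mser pM qM nuM; case: (eqVneq p q) => [-> // | pq].
case: (boolP (adj p q)) => [pq_adj | npq].
  exact/esym/(side_crossing (nuM p pM) (nuM q qM)).
have [t tM /andP [pt qt]] := serial_common_neighbor Mser pM qM (introT andP (conj pq npq)).
rewrite -(side_crossing (nuM p pM) (nuM t tM) pt).
exact: side_crossing (nuM q qM) (nuM t tM) qt.
Qed.

Lemma sub_L_or_R u v w : nonadj adj u v -> nonadj adj u w ->
  [set v; w] \subset L u \/ [set v; w] \subset R u <-> side u v = side u w.
Proof.
move=> nuv nuw; rewrite !subUset !sub1set (mem_R nuv) (mem_R nuw).
rewrite (mem_L_side nuv) (mem_L_side nuw).
by case: (side u v) (side u w) (orient u) => [] [] []; split=> //=; by [left | right | case].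
Qed.

(** * Transfer to representatives *)

Variable Mi : {set V}.
Hypothesis Mi_child : Mi \in children.

Lemma common_side_transfer Mj u u' v w : Mj \in children -> Mj != Mi ->
    u \in Mj -> u' \in Mj -> v \in Mi -> w \in Mi -> nonadj adj u v ->
  side u' v = side u' w -> side u v = side u w.
Proof.
move=> Mjch MjMi uMj u'Mj vMi wMi nuv u'_same.
have nonadj_ji a b : a \in Mj -> b \in Mi -> nonadj adj a b.
  by move=> aMj bMi; rewrite -(children_nonadj Mjch Mi_child MjMi uMj aMj vMi bMi).
have nuw := nonadj_ji u w uMj wMi.
apply/eqP; apply: contraT => u_sep.
have [x xMi xMi_adj] := child_neighbor Mi_child.
have vx : adj v x by rewrite adj_sym xMi_adj.
have wx : adj w x by rewrite adj_sym xMi_adj.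
have xMj : x \notin Mj by apply: contraL vx => /nonadj_ji/(_ vMi)/andP [_]; rewrite adj_sym.
have ux : adj u x := crossing_separated nuv nuw u_sep vx wx.
have u'x : adj u' x by rewrite adj_sym (child_adj Mjch xMj u'Mj uMj) adj_sym.
(* By primality some z tells Mi from Mj.  If z crosses v and w, it crosses u as
   well; if z crosses u and u' only, then x cannot cross u'. *)
have MiMj : Mi != Mj by rewrite eq_sym.
have [z [zMi zMj z_sep]] := children_distinguished Mi_child Mjch MiMj vMi uMj.
have zw : adj z w = adj z v := child_adj Mi_child zMi wMi vMi.
have zu' : adj z u' = adj z u := child_adj Mjch zMj u'Mj uMj.
case: (boolP (adj z v)) => zv.
  have zu : adj z u by rewrite adj_sym (crossing_separated nuv nuw u_sep) // adj_sym ?zw.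
  by rewrite zv zu in z_sep.
have zu : adj z u by move: z_sep; rewrite (negbTE zv); case: (adj z u).
have same_side y : y \in Mi -> ~~ adj z y -> side y u = side y u'.
  move=> yMi zy; apply/eqP; apply: contraNT zy => y_sep; rewrite adj_sym.
  by apply: crossing_separated y_sep _ _; rewrite 1?nonadj_sym ?nonadj_ji // adj_sym ?zu'.
have := crossing_pair_nonadj nuv nuw (nonadj_ji u' v u'Mj vMi) (nonadj_ji u' w u'Mj wMi)
  u_sep u'_same (same_side v vMi zv) (same_side w wMi _) vx wx.
by rewrite zw u'x; apply.
Qed.

Lemma serial_common_side_transfer Mj u u' p q : serial adj Mi -> Mj \in children -> Mj != Mi ->
    u \in Mj -> u' \in Mj -> p \in Mi -> q \in Mi -> nonadj adj u p ->
  side p u = side p u' -> side q u = side q u'.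
Proof.
move=> Miser Mjch MjMi uMj u'Mj pMi qMi nup p_same.
have nonadj_ji a b : a \in Mj -> b \in Mi -> nonadj adj a b.
  by move=> aMj bMi; rewrite -(children_nonadj Mjch Mi_child MjMi uMj aMj pMi bMi).
have side_Mi a : a \in Mj -> side a q = side a p.
  by move=> aMj; apply: serial_same_side Miser qMi pMi _ => y; apply: nonadj_ji.
have [x xMj xMj_adj] := child_neighbor Mjch.
have ux : adj u x by rewrite adj_sym xMj_adj.
have u'x : adj u' x by rewrite adj_sym xMj_adj.
have xMi : x \notin Mi by apply: contraL ux => /(nonadj_ji u x uMj)/andP [].
apply/eqP; apply: contraT => q_sep.
have qx : adj q x by apply: crossing_separated q_sep ux u'x; rewrite nonadj_sym nonadj_ji.
have px : adj p x by rewrite adj_sym (child_adj Mi_child xMi pMi qMi) adj_sym.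
by rewrite (crossing_same_side _ _ _ _ (side_Mi u uMj) (side_Mi u' u'Mj) p_same ux u'x px)
  ?nonadj_ji ?eqxx in q_sep.
Qed.

Lemma serial_mem_L_transfer Mj u u' v w : serial adj Mi -> Mj \in children -> Mj != Mi ->
    u \in Mj -> u' \in Mj -> v \in Mi -> w \in Mi -> nonadj adj v u ->
  ((u \in L v) == (u \in L w)) = ((u' \in L v) == (u' \in L w)).
Proof.
move=> Miser Mjch MjMi uMj u'Mj vMi wMi nvu.
have nonadj_ij a b : a \in Mi -> b \in Mj -> nonadj adj a b.
  by move=> aMi bMj; rewrite -(children_nonadj Mi_child Mjch _ vMi aMi uMj bMj) // eq_sym.
have nuv : nonadj adj u v by rewrite nonadj_sym.
have nuw : nonadj adj u w by rewrite nonadj_sym nonadj_ij.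
have transfer : (side v u == side v u') = (side w u == side w u').
  have transfer_to := serial_common_side_transfer Miser Mjch MjMi uMj u'Mj.
  by apply/eqP/eqP; [apply: transfer_to vMi wMi nuv | apply: transfer_to wMi vMi nuw].
rewrite !mem_L_side ?nonadj_ij //; move: transfer.
by case: (side v u) (side v u') (side w u) (side w u') (orient v) (orient w)
  => [] [] [] [] [] [].
Qed.

Lemma common_side_representatives v w : v \in Mi -> w \in Mi ->
  (forall u, u \in Q :\: Mi -> (forall x, x \in Mi -> nonadj adj u x) ->
     [set v; w] \subset L u \/ [set v; w] \subset R u)
  <->
  (forall u, u \in U :\: Mi -> (forall x, x \in Mi -> nonadj adj u x) ->
     [set v; w] \subset L u \/ [set v; w] \subset R u).
Proof.
move=> vMi wMi; split=> common u /setDP [uX uMi] nuMi.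
  by apply: common nuMi; rewrite inE uMi (subsetP representatives_subset).
have [Mj Mjch uMj] := child_cover uX.
have MjMi : Mj != Mi by apply: contraNneq uMi => <-.
have [u' [u'U u'Mj _]] := child_representative Mjch.
have nu'Mi x : x \in Mi -> nonadj adj u' x.
  by move=> xMi; rewrite -(children_nonadj Mjch Mi_child MjMi uMj u'Mj vMi xMi) nuMi.
have u'Mi : u' \notin Mi := child_notin Mjch Mi_child MjMi u'Mj.
apply/(sub_L_or_R (nuMi v vMi) (nuMi w wMi)).
apply: (common_side_transfer Mjch MjMi uMj u'Mj vMi wMi (nuMi v vMi)).
apply/(sub_L_or_R (nu'Mi v vMi) (nu'Mi w wMi)).
by apply: common nu'Mi; rewrite inE u'U u'Mi.
Qed.

Lemma side_split_representatives v w : serial adj Mi -> v \in Mi -> w \in Mi ->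
  [set L v :&: (Q :\: Mi); R v :&: (Q :\: Mi)]
    = [set L w :&: (Q :\: Mi); R w :&: (Q :\: Mi)]
  <->
  [set L v :&: (U :\: Mi); R v :&: (U :\: Mi)]
    = [set L w :&: (U :\: Mi); R w :&: (U :\: Mi)].
Proof.
move=> Miser vMi wMi.
have same_nonadj (X : {set V}) : {in X :\: Mi, forall u, nonadj adj v u = nonadj adj w u}.
  by move=> u /setDP [_ uMi]; apply: child_nonadj Mi_child uMi vMi wMi.
apply: (iff_trans (sides_pair_eqP (same_nonadj Q))).
apply: iff_sym; apply: (iff_trans (sides_pair_eqP (same_nonadj U))).
split=> [] [b b_const]; exists b => u /setDP [uX uMi] nvu; last first.
  by apply: b_const nvu; rewrite inE uMi (subsetP representatives_subset).
have [Mj Mjch uMj] := child_cover uX.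
have MjMi : Mj != Mi by apply: contraNneq uMi => <-.
have [u' [u'U u'Mj _]] := child_representative Mjch.
have u'Mi : u' \notin Mi := child_notin Mjch Mi_child MjMi u'Mj.
have nvu' : nonadj adj v u' by rewrite -(children_nonadj Mi_child Mjch _ vMi vMi uMj) // eq_sym.
rewrite (serial_mem_L_transfer Miser Mjch MjMi uMj u'Mj vMi wMi nvu).
by apply: b_const nvu'; rewrite inE u'U u'Mi.
Qed.

End PrimeNode.

Theorem mainTheorem2 (V : finType) (adj : rel V) (L R : V -> {set V})
  (adj_sym : symmetric adj) (adj_irr : irreflexive adj)
  (sides : forall u : V,
     L u :&: R u = set0 /\ L u :|: R u = [set v | nonadj adj u v])
  (conf : exists s : seq (V * bool), conformal_model adj L R s)
  (Q : {set V}) (HQ : prime_node adj Q)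
  (U : {set V}) (HU : representatives adj Q U)
  (Mi : {set V}) (HMi : Mi \in md_children adj Q)
  (v w : V) (Hv : v \in Mi) (Hw : w \in Mi) :
  (parallel adj Mi ->
     ((forall u, u \in Q :\: Mi -> (forall x, x \in Mi -> nonadj adj u x) ->
         [set v; w] \subset L u \/ [set v; w] \subset R u)
      <->
      (forall u, u \in U :\: Mi -> (forall x, x \in Mi -> nonadj adj u x) ->
         [set v; w] \subset L u \/ [set v; w] \subset R u)))
  /\
  (serial adj Mi ->
     ([set L v :&: (Q :\: Mi); R v :&: (Q :\: Mi)]
        = [set L w :&: (Q :\: Mi); R w :&: (Q :\: Mi)]
      <->
      [set L v :&: (U :\: Mi); R v :&: (U :\: Mi)]
        = [set L w :&: (U :\: Mi); R w :&: (U :\: Mi)])).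
Proof.
have [s model] := conf; split=> [_ | Mi_serial].
  exact: (common_side_representatives adj_sym adj_irr HQ HU sides model HMi).
exact: (side_split_representatives adj_sym adj_irr HQ HU sides model HMi).
Qed.
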